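(* Let $X$ be a set and let $A$ be a proper semiset of $X$, i.e. $A$ is a subclass of $X$ which is not a set. Suppose every element of $A$ satisfies a definite objective condition $P$ on $X$. Then there is an $x\in X\setminus A$ satisfying $P$.
   Context: The framework is a mathematics of finite sets with an undefined predicate ''accessible'' on natural numbers obeying: $0$ and $1$ are accessible; sums and products of accessible numbers are accessible; every number less than an accessible number is accessible; there exist numbers that are not accessible (called huge). Only finite sets are sets; a class is a collection whose elements can be decided equal or different; a class that is not a set is a proper class (e.g. the class of accessible numbers). A semiset is a subclass of a set. A condition is objective if it is specified without using the notion of accessibility, and definite if all its quantifiers are bounded by sets (of the form $\forall x\in a$ or $\exists x\in a$ with $a$ a set). Axiom (objective separation): every subclass of a set defined by an objective definite condition is a set. *)

(* An abstract model of the framework of the paper: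
   a universe of objects [obj], a membership relation, a predicate [is_set]
   singling out the (finite) sets, and an abstract predicate
   [objective_definite] on conditions, subject to the axiom of objective
   separation. *)

Record Framework := {
  obj : Type;
  mem : obj -> obj -> Prop;                   (* x ∈ a *)
  is_set : obj -> Prop;
  objective_definite : (obj -> Prop) -> Prop;
  objective_separation :
    forall (X : obj) (P : obj -> Prop),
      is_set X -> objective_definite P ->
      exists B : obj, is_set B /\ forall x, mem x B <-> (mem x X /\ P x)
}.

Definition class (F : Framework) := obj F -> Prop.

Definition class_is_set (F : Framework) (C : class F) : Prop :=
  exists a : obj F, is_set F a /\ forall x, C x <-> mem F x a.

Definition subclass_of (F : Framework) (C : class F) (X : obj F) : Prop :=
  forall x, C x -> mem F x X.

Definition proper_semiset_of (F : Framework) (A : class F) (X : obj F) : Prop :=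
  subclass_of F A X /\ ~ class_is_set F A.

From Stdlib Require Import Classical.

(* If no element of [X \ A] satisfied [P], then [A] would be exactly the
   subclass of [X] cut out by [P], which is a set by objective separation. *)

Lemma separation_class_is_set (F : Framework) (X : obj F) (P : obj F -> Prop) :
  is_set F X -> objective_definite F P ->
  class_is_set F (fun x => mem F x X /\ P x).
Proof.
  intros HX HP.
  destruct (objective_separation F X P HX HP) as [B [HB HBmem]].
  exists B; split; [exact HB |].
  intro x; symmetry; apply HBmem.
Qed.

Lemma class_is_set_ext (F : Framework) (C D : class F) :
  (forall x, C x <-> D x) -> class_is_set F C -> class_is_set F D.
Proof.
  intros HCD [a [Ha Hmem]].
  exists a; split; [exact Ha |].
  intro x; rewrite <- HCD; apply Hmem.
Qed.

Theorem mainTheorem1 (F : Framework) (X : obj F) (A : class F)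
  (P : obj F -> Prop) :
  is_set F X ->
  proper_semiset_of F A X ->
  objective_definite F P ->
  (forall x, A x -> P x) ->
  exists x, mem F x X /\ ~ A x /\ P x.
Proof.
  intros HX [HAX HAnot_set] HP HAP.
  apply NNPP; intro Hnone.
  apply HAnot_set.
  apply (class_is_set_ext F (fun x => mem F x X /\ P x));
    [| exact (separation_class_is_set F X P HX HP)].
  intro x; split.
  - intros [HxX HPx].
    apply NNPP; intro HnA.
    apply Hnone; exists x; auto.
  - intro HAx; split; [apply HAX | apply HAP]; exact HAx.
Qed.
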